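(* Let $p,q\ge 2$. (i) If $M_1, M_2 \subset \widetilde{\mathrm{Ein}}^{p,q}$ are two Minkowski patches, then $\pi_{\mathbf{X}}(M_1 \cap \iota(M_2))$ is the complement of $\pi_{\mathbf{X}}(M_1 \cap M_2)$ in $\pi_{\mathbf{X}}(M_1) \cap \pi_{\mathbf{X}}(M_2)$. (ii) If $M_1, M_2, M_3 \subset \widetilde{\mathrm{Ein}}^{p,q}$ are three Minkowski patches with $M_1 \cap M_3 = M_2 \cap M_3$, then $M_1 = M_2$.
   Context: $\widetilde{\mathrm{Ein}}^{p,q}\cong\mathbb{S}^p\times\mathbb{S}^q$ is the set of isotropic vectors of Euclidean norm $1$ in $\mathbb{R}^{p+1,q+1}$, $\pi_{\mathbf{X}}$ its double cover onto $\mathrm{Ein}^{p,q}$ (isotropic lines, with induced conformal structure), and $\iota$ the product of antipodal maps. Minkowski patches of $\mathrm{Ein}^{p,q}$ are $M_x=\{[w]:B(v,w)\neq0\}$ for $x=[v]$ isotropic; those of $\widetilde{\mathrm{Ein}}^{p,q}$ are the connected components of $\pi_{\mathbf{X}}^{-1}(M_x)$. *)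

From Stdlib Require Import Reals.
Open Scope R_scope.

(* Vectors of R^{p+1,q+1} are functions nat -> R whose coordinates of index
   >= p+q+2 vanish.  Coordinates 0..p have sign +, coordinates p+1..p+q+1
   have sign -. *)
Definition vec := nat -> R.

Fixpoint rsum (n : nat) (f : nat -> R) : R :=
  match n with O => 0 | S n => rsum n f + f n end.

Definition isvec (p q : nat) (v : vec) : Prop :=
  forall i, (p + q + 2 <= i)%nat -> v i = 0.

Definition Bform (p q : nat) (v w : vec) : R :=
  rsum (S p) (fun i => v i * w i)
  - rsum (S q) (fun i => v (S p + i)%nat * w (S p + i)%nat).

Definition eucl_norm (p q : nat) (v : vec) : R :=
  sqrt (rsum (p + q + 2) (fun i => v i * v i)).

Definition vzero : vec := fun _ => 0.
Definition vscale (c : R) (v : vec) : vec := fun i => c * v i.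
Definition vopp (v : vec) : vec := fun i => - v i.

(* isotropic nonzero vector: representative of a point of Ein^{p,q} *)
Definition EinRep (p q : nat) (u : vec) : Prop :=
  isvec p q u /\ u <> vzero /\ Bform p q u u = 0.

Definition Etilde (p q : nat) (w : vec) : Prop :=
  isvec p q w /\ Bform p q w w = 0 /\ eucl_norm p q w = 1.

(* A subset of Ein^{p,q} (= set of isotropic lines) is represented by the
   predicate "u is a representative of a line in the subset". *)

Definition piX (S : vec -> Prop) : vec -> Prop :=
  fun u => exists w, S w /\ exists c, c <> 0 /\ u = vscale c w.

(* iota = product of antipodal maps = v |-> -v *)
Definition iota (w : vec) : vec := vopp w.

Definition image (f : vec -> vec) (S : vec -> Prop) : vec -> Prop :=
  fun w => exists u, S u /\ w = f u.

Definition inter (S T : vec -> Prop) : vec -> Prop := fun w => S w /\ T w.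

Definition MinkEin (p q : nat) (v : vec) : vec -> Prop :=
  fun u => EinRep p q u /\ Bform p q v u <> 0.

Definition preimX (p q : nat) (A : vec -> Prop) : vec -> Prop :=
  fun w => Etilde p q w /\ A w.

Definition dist (p q : nat) (x y : vec) : R :=
  eucl_norm p q (fun i => x i - y i).

Definition is_open (p q : nat) (U : vec -> Prop) : Prop :=
  forall x, U x -> exists eps, eps > 0 /\
    forall y, dist p q x y < eps -> U y.

Definition connected (p q : nat) (S : vec -> Prop) : Prop :=
  ~ (exists U V, is_open p q U /\ is_open p q V /\
       (forall x, S x -> U x \/ V x) /\
       (exists x, S x /\ U x) /\ (exists x, S x /\ V x) /\
       (forall x, S x -> U x -> V x -> False)).

Definition is_component (p q : nat) (A C : vec -> Prop) : Prop :=
  (exists x, C x) /\ (forall x, C x -> A x) /\ connected p q C /\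
  (forall D, connected p q D -> (forall x, C x -> D x) ->
     (forall x, D x -> A x) -> forall x, D x -> C x).

Definition MinkPatchTilde (p q : nat) (M : vec -> Prop) : Prop :=
  exists v, EinRep p q v /\ is_component p q (preimX p q (MinkEin p q v)) M.

From Pilot Require Import Defs.
From Stdlib Require Import Reals Lra Lia FunctionalExtensionality PropExtensionality Classical.
Open Scope R_scope.

(** In the splitting of [R^{p+1,q+1}] into its positive and negative blocks, [Etilde] is a
    product of two spheres of radius [sqrt (1/2)], and for isotropic [v] the value [B(v,w)]
    is a positive multiple of the sum of the coordinates of [w] along unit vectors of the
    two blocks determined by [v].  Rotating each block of [w] toward that unit vector only
    increases [B(v,w)], so the half [B(v,.) > 0] of [Etilde] is connected; as
    [pi_X^{-1}(M_[v])] is the disjoint union of the open halves [B(v,.) > 0] and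
    [B(v,.) < 0], these halves are exactly the Minkowski patches of [Etilde].

    Part (i) is then a matter of signs: [[u]] lies in [pi_X(M1 /\ M2)] iff
    [B(v1,u) B(v2,u) > 0], and in [pi_X(M1 /\ iota M2)] iff this product is negative.
    For part (ii), a block rotation also shows that every point with [B(v,w) = 0] is a
    limit of points of the half [B(v,.) > 0].  A point of [M1] outside [M2] can thus be
    moved inside [M1] so that [B(v2,.) < 0] and [B(v3,.) <> 0]; it, or its antipode, then
    contradicts [M1 /\ M3 = M2 /\ M3]. *)

Lemma rsum_ext n f g : (forall i, (i < n)%nat -> f i = g i) -> rsum n f = rsum n g.
Proof.
  induction n as [|n IH]; intros H; simpl; [reflexivity|].
  rewrite IH, H; [reflexivity|lia|intros; apply H; lia].
Qed.

Lemma rsum_plus n f g : rsum n (fun i => f i + g i) = rsum n f + rsum n g.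
Proof. induction n as [|n IH]; simpl; [lra|]. rewrite IH. lra. Qed.

Lemma rsum_scal n c f : rsum n (fun i => c * f i) = c * rsum n f.
Proof. induction n as [|n IH]; simpl; [lra|]. rewrite IH. lra. Qed.

Lemma rsum_app a b f : rsum (a + b) f = rsum a f + rsum b (fun i => f (a + i)%nat).
Proof.
  induction b as [|b IH]; simpl; [rewrite Nat.add_0_r; lra|].
  rewrite Nat.add_succ_r. simpl. rewrite IH. lra.
Qed.

Lemma rsum_le n f g : (forall i, (i < n)%nat -> f i <= g i) -> rsum n f <= rsum n g.
Proof.
  induction n as [|n IH]; intros H; simpl; [lra|].
  apply Rplus_le_compat; [apply IH; intros; apply H|apply H]; lia.
Qed.

Lemma rsum_nonneg n f : (forall i, (i < n)%nat -> 0 <= f i) -> 0 <= rsum n f.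
Proof.
  induction n as [|n IH]; intros H; simpl; [lra|].
  assert (0 <= rsum n f) by (apply IH; intros; apply H; lia).
  assert (0 <= f n) by (apply H; lia). lra.
Qed.

Lemma rsum_ge_term n f i :
  (forall j, (j < n)%nat -> 0 <= f j) -> (i < n)%nat -> f i <= rsum n f.
Proof.
  induction n as [|n IH]; intros H Hi; simpl; [lia|].
  assert (0 <= rsum n f) by (apply rsum_nonneg; intros; apply H; lia).
  assert (0 <= f n) by (apply H; lia).
  destruct (Nat.eq_dec i n) as [->|Hin]; [lra|].
  assert (f i <= rsum n f) by (apply IH; [intros; apply H|]; lia). lra.
Qed.

Lemma rsum_sq_eq0 n f :
  rsum n (fun i => f i * f i) = 0 -> forall i, (i < n)%nat -> f i = 0.
Proof.
  intros H i Hi.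
  assert (f i * f i <= rsum n (fun i => f i * f i))
    by (apply (rsum_ge_term n (fun i => f i * f i)); [intros; nra|exact Hi]).
  nra.
Qed.

Lemma rsum_abs n f : Rabs (rsum n f) <= rsum n (fun i => Rabs (f i)).
Proof.
  induction n as [|n IH]; simpl; [rewrite Rabs_R0; lra|].
  eapply Rle_trans; [apply Rabs_triang|lra].
Qed.

Lemma rsum_first_two m f :
  (2 <= m)%nat -> (forall i, (2 <= i < m)%nat -> f i = 0) -> rsum m f = f 0%nat + f 1%nat.
Proof.
  induction m as [|m IH]; intros Hm H; [lia|].
  destruct (Nat.eq_dec m 1) as [->|]; simpl; [lra|].
  rewrite IH, (H m) by (try intros; try apply H; lia). lra.
Qed.

Lemma rsum_continuity_pt n (F : nat -> R -> R) x :
  (forall i, (i < n)%nat -> continuity_pt (F i) x) ->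
  continuity_pt (fun t => rsum n (fun i => F i t)) x.
Proof.
  induction n as [|n IH]; intros H; simpl.
  - apply continuity_pt_const. now intros a b.
  - apply (continuity_pt_plus (fun t => rsum n (fun i => F i t)) (F n));
      [apply IH; intros|]; apply H; lia.
Qed.

Definition bsum (o m : nat) (f g : vec) : R :=
  rsum m (fun i => f (o + i)%nat * g (o + i)%nat).

Lemma bsum_ext o m f f' g g' :
  (forall i, (i < m)%nat -> f (o + i)%nat = f' (o + i)%nat) ->
  (forall i, (i < m)%nat -> g (o + i)%nat = g' (o + i)%nat) ->
  bsum o m f g = bsum o m f' g'.
Proof. intros Hf Hg. apply rsum_ext. intros i Hi. now rewrite Hf, Hg. Qed.

Lemma bsum_sym o m f g : bsum o m f g = bsum o m g f.
Proof. apply rsum_ext. intros; ring. Qed.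

Lemma bsum_scal_l o m a f g : bsum o m (vscale a f) g = a * bsum o m f g.
Proof. unfold bsum, vscale. rewrite <- rsum_scal. apply rsum_ext. intros; ring. Qed.

Lemma bsum_scal_r o m a f g : bsum o m f (vscale a g) = a * bsum o m f g.
Proof. rewrite bsum_sym, bsum_scal_l, bsum_sym. reflexivity. Qed.

Lemma bsum_self_nonneg o m f : 0 <= bsum o m f f.
Proof. apply rsum_nonneg. intros; nra. Qed.

Lemma vopp_scale v : vopp v = vscale (-1) v.
Proof. apply functional_extensionality. intros. unfold vopp, vscale. ring. Qed.

Definition in_block (o m j : nat) : bool := (o <=? j)%nat && (j <? o + m)%nat.

Lemma in_blockP o m j : in_block o m j = true <-> (o <= j < o + m)%nat.
Proof. unfold in_block. rewrite Bool.andb_true_iff, Nat.leb_le, Nat.ltb_lt. tauto. Qed.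

Definition upd (o m : nat) (w f : vec) : vec := fun j => if in_block o m j then f j else w j.

Lemma upd_in o m w f i : (i < m)%nat -> upd o m w f (o + i)%nat = f (o + i)%nat.
Proof.
  intros Hi. unfold upd.
  replace (in_block o m (o + i)) with true by (symmetry; apply in_blockP; lia).
  reflexivity.
Qed.

Lemma upd_out o m w f j : ~ (o <= j < o + m)%nat -> upd o m w f j = w j.
Proof.
  intros Hj. unfold upd. destruct (in_block o m j) eqn:E; [|reflexivity].
  apply in_blockP in E. contradiction.
Qed.

Definition disjoint_blocks (o m o' m' : nat) : Prop := (o + m <= o' \/ o' + m' <= o)%nat.

Lemma bsum_upd_r o m w f g : bsum o m g (upd o m w f) = bsum o m g f.
Proof. apply bsum_ext; intros; [reflexivity|apply upd_in; assumption]. Qed.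

Lemma bsum_upd o m w f : bsum o m (upd o m w f) (upd o m w f) = bsum o m f f.
Proof. rewrite bsum_upd_r, bsum_sym, bsum_upd_r. apply bsum_sym. Qed.

Lemma bsum_upd_disjoint_r o m o' m' w f g :
  disjoint_blocks o m o' m' -> bsum o' m' g (upd o m w f) = bsum o' m' g w.
Proof.
  intros Hd. apply bsum_ext; intros i Hi; [reflexivity|].
  apply upd_out. unfold disjoint_blocks in Hd. lia.
Qed.

Lemma bsum_upd_disjoint o m o' m' w f :
  disjoint_blocks o m o' m' -> bsum o' m' (upd o m w f) (upd o m w f) = bsum o' m' w w.
Proof.
  intros Hd. rewrite bsum_upd_disjoint_r, bsum_sym, bsum_upd_disjoint_r by exact Hd.
  apply bsum_sym.
Qed.

Section Blocks.
Variables p q : nat.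

(** Block [true] carries the coordinates [0..p], where [B] is positive, block [false]
    the coordinates [p+1..p+q+1], where it is negative. *)
Definition boff (b : bool) : nat := if b then 0%nat else S p.
Definition blen (b : bool) : nat := if b then S p else S q.
Definition bdot (b : bool) : vec -> vec -> R := bsum (boff b) (blen b).

Lemma blocks_disjoint b : disjoint_blocks (boff b) (blen b) (boff (negb b)) (blen (negb b)).
Proof. unfold disjoint_blocks. destruct b; simpl; lia. Qed.

Lemma Bform_bdot v w : Bform p q v w = bdot true v w - bdot false v w.
Proof. reflexivity. Qed.

Lemma Bform_scal_l a v w : Bform p q (vscale a v) w = a * Bform p q v w.
Proof. rewrite !Bform_bdot. unfold bdot. rewrite !bsum_scal_l. ring. Qed.

Lemma Bform_scal_r a v w : Bform p q v (vscale a w) = a * Bform p q v w.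
Proof. rewrite !Bform_bdot. unfold bdot. rewrite !bsum_scal_r. ring. Qed.

Lemma Bform_opp_l v w : Bform p q (vopp v) w = - Bform p q v w.
Proof. rewrite vopp_scale, Bform_scal_l. ring. Qed.

Lemma Bform_opp_r v w : Bform p q v (vopp w) = - Bform p q v w.
Proof. rewrite vopp_scale, Bform_scal_r. ring. Qed.

Lemma isvec_scal a v : isvec p q v -> isvec p q (vscale a v).
Proof. intros Hv i Hi. unfold vscale. rewrite Hv by exact Hi. ring. Qed.

Lemma Etilde_iff w :
  Etilde p q w <-> isvec p q w /\ forall b, bdot b w w = / 2.
Proof.
  unfold Etilde, eucl_norm.
  replace (p + q + 2)%nat with (S p + S q)%nat by lia. rewrite rsum_app, Bform_bdot.
  change (rsum (S p) _) with (bdot true w w).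
  change (rsum (S q) _) with (bdot false w w).
  pose proof (bsum_self_nonneg 0 (S p) w). pose proof (bsum_self_nonneg (S p) (S q) w).
  unfold bdot in *; simpl in *. split.
  - intros [Hw [Hiso Hnorm]]. split; [exact Hw|].
    assert (Hsum : bsum 0 (S p) w w + bsum (S p) (S q) w w = 1)
      by (apply sqrt_inj; [lra|lra|rewrite Hnorm, sqrt_1; reflexivity]).
    intros [|]; simpl; lra.
  - intros [Hw Hb]. specialize (Hb true) as Ht. specialize (Hb false) as Hf. simpl in Ht, Hf.
    split; [exact Hw|]. rewrite Ht, Hf. split; [lra|].
    replace (/ 2 + / 2) with 1 by lra. apply sqrt_1.
Qed.

Lemma Etilde_upd b w f :
  Etilde p q w -> bsum (boff b) (blen b) f f = / 2 -> Etilde p q (upd (boff b) (blen b) w f).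
Proof.
  rewrite !Etilde_iff. intros [Hw Hb] Hf. split.
  - intros j Hj. rewrite upd_out by (destruct b; simpl; lia). now apply Hw.
  - intros b'. unfold bdot. destruct (Bool.bool_dec b b') as [<-|Hne].
    + now rewrite bsum_upd.
    + replace b' with (negb b) by (destruct b, b'; simpl; congruence).
      rewrite bsum_upd_disjoint by apply blocks_disjoint. apply Hb.
Qed.

Lemma Etilde_opp w : Etilde p q w -> Etilde p q (vopp w).
Proof.
  rewrite !Etilde_iff, vopp_scale. intros [Hw Hb]. split; [now apply isvec_scal|].
  intros b. unfold bdot in *. rewrite bsum_scal_l, bsum_scal_r, Hb. ring.
Qed.

Lemma EinRep_opp v : EinRep p q v -> EinRep p q (vopp v).
Proof.
  intros [Hv [Hnz Hiso]]. split; [|split].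
  - rewrite vopp_scale. now apply isvec_scal.
  - intros Hz. apply Hnz. apply functional_extensionality. intros i.
    assert (Hi : vopp v i = vzero i) by now rewrite Hz.
    unfold vopp, vzero in *. lra.
  - rewrite Bform_opp_l, Bform_opp_r, Hiso. ring.
Qed.

Lemma Etilde_EinRep w : Etilde p q w -> EinRep p q w.
Proof.
  intros Ew. pose proof Ew as [Hw [Hiso _]]. split; [exact Hw|split; [|exact Hiso]].
  intros ->. apply Etilde_iff in Ew as [_ Hb]. specialize (Hb true).
  unfold bdot, bsum, vzero in Hb.
  rewrite (rsum_scal _ 0 (fun _ => 0)) in Hb. lra.
Qed.

Lemma EinRep_bdot v : EinRep p q v -> 0 < bdot true v v /\ bdot false v v = bdot true v v.
Proof.
  intros [Hv [Hnz Hiso]]. rewrite Bform_bdot in Hiso. split; [|lra].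
  destruct (classic (exists i, v i <> 0)) as [[i Hi]|Hall].
  2:{ exfalso. apply Hnz. apply functional_extensionality. intros i. apply NNPP. eauto. }
  assert (Hil : (i < S p + S q)%nat) by (destruct (Nat.lt_ge_cases i (S p + S q)); [lia|];
    exfalso; apply Hi, Hv; lia).
  pose proof (rsum_ge_term _ (fun i => v i * v i) i (fun j _ => Rle_0_sqr (v j)) Hil) as Hterm.
  rewrite rsum_app in Hterm.
  change (rsum (S p) _) with (bdot true v v) in Hterm.
  change (rsum (S q) _) with (bdot false v v) in Hterm.
  assert (0 < v i * v i) by (apply Rsqr_pos_lt in Hi; exact Hi). lra.
Qed.

Lemma EinRep_normalize u :
  EinRep p q u -> exists k w, 0 < k /\ Etilde p q w /\ u = vscale k w.
Proof.
  intros Hu. pose proof (EinRep_bdot u Hu) as [Hpos Heq].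
  set (k := sqrt (2 * bdot true u u)).
  assert (Hk : 0 < k) by (apply sqrt_lt_R0; lra).
  assert (Hkk : k * k = 2 * bdot true u u) by (apply sqrt_sqrt; lra).
  exists k, (vscale (/ k) u). split; [exact Hk|split].
  - apply Etilde_iff. split; [apply isvec_scal; apply Hu|].
    intros b. unfold bdot. rewrite bsum_scal_l, bsum_scal_r.
    replace (bsum (boff b) (blen b) u u) with (bdot true u u)
      by (destruct b; [reflexivity|symmetry; exact Heq]).
    replace (/ k * (/ k * bdot true u u)) with (bdot true u u / (k * k)) by (field; lra).
    rewrite Hkk. field. lra.
  - apply functional_extensionality. intros i. unfold vscale. field. lra.
Qed.

Section UnitDirections.
Variable v : vec.
Hypothesis Hv : EinRep p q v.

Definition vsize : R := sqrt (bdot true v v).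

(** The sign in block [false] makes [B(v,w)] a positive multiple of the sum of the two
    block coordinates of [w] (lemma [Bform_bcoord]). *)
Definition vdir (b : bool) : vec := vscale ((if b then 1 else -1) / vsize) v.

Definition bcoord (b : bool) (w : vec) : R := bdot b (vdir b) w.

Lemma vsize_pos : 0 < vsize.
Proof. apply sqrt_lt_R0, EinRep_bdot, Hv. Qed.

Lemma vdir_unit b : bdot b (vdir b) (vdir b) = 1.
Proof.
  pose proof (EinRep_bdot v Hv) as [Hpos Heq]. pose proof vsize_pos.
  assert (Hs : vsize * vsize = bdot true v v) by (apply sqrt_sqrt; lra).
  assert (Hb : bdot b v v = vsize * vsize) by (destruct b; lra).
  unfold vdir, bdot. rewrite bsum_scal_l, bsum_scal_r.
  change (bsum (boff b) (blen b) v v) with (bdot b v v). rewrite Hb.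
  destruct b; field; lra.
Qed.

Lemma Bform_bcoord w : Bform p q v w = vsize * (bcoord true w + bcoord false w).
Proof.
  pose proof vsize_pos. unfold bcoord, vdir, bdot.
  rewrite Bform_bdot, !bsum_scal_l. unfold bdot. simpl. field. lra.
Qed.

End UnitDirections.
End Blocks.

Definition rho : R := sqrt (/ 2).

Lemma rho_pos : 0 < rho.
Proof. apply sqrt_lt_R0. lra. Qed.

Lemma rho_sq : rho * rho = / 2.
Proof. apply sqrt_sqrt. lra. Qed.

Section UnitVector.
Variables (o m : nat) (e w : vec).
Hypothesis He : bsum o m e e = 1.
Hypothesis Hw : bsum o m w w = / 2.

Lemma bsum_residual c :
  bsum o m (fun j => w j + - c * e j) (fun j => w j + - c * e j)
  = / 2 - 2 * c * bsum o m e w + c * c.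
Proof.
  unfold bsum.
  rewrite (rsum_ext _ _ (fun i => w (o + i)%nat * w (o + i)%nat
     + ((-2 * c) * (e (o + i)%nat * w (o + i)%nat) + (c * c) * (e (o + i)%nat * e (o + i)%nat))))
    by (intros; ring).
  rewrite !rsum_plus, !rsum_scal. fold (bsum o m w w) (bsum o m e w) (bsum o m e e).
  rewrite Hw, He. ring.
Qed.

Lemma bsum_unit_cauchy_schwarz : bsum o m e w * bsum o m e w <= / 2.
Proof.
  pose proof (bsum_self_nonneg o m (fun j => w j + - bsum o m e w * e j)) as H.
  rewrite bsum_residual in H. nra.
Qed.

Lemma bsum_unit_cauchy_schwarz_eq :
  bsum o m e w * bsum o m e w = / 2 ->
  forall i, (i < m)%nat -> w (o + i)%nat = bsum o m e w * e (o + i)%nat.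
Proof.
  intros Heq i Hi. set (c := bsum o m e w) in *.
  assert (H0 : bsum o m (fun j => w j + - c * e j) (fun j => w j + - c * e j) = 0)
    by (rewrite bsum_residual; fold c; lra).
  pose proof (rsum_sq_eq0 m (fun i => w (o + i)%nat + - c * e (o + i)%nat) H0 i Hi). lra.
Qed.

Lemma bsum_unit_bounds : - rho <= bsum o m e w <= rho.
Proof. pose proof bsum_unit_cauchy_schwarz. pose proof rho_pos. pose proof rho_sq. split; nra. Qed.

Lemma upd_scale_rho_id : bsum o m e w = rho -> upd o m w (vscale rho e) = w.
Proof.
  intros Hmax. apply functional_extensionality. intros j. unfold upd.
  destruct (in_block o m j) eqn:Hj; [|reflexivity].
  apply in_blockP in Hj. replace j with (o + (j - o))%nat by lia.
  rewrite bsum_unit_cauchy_schwarz_eq, Hmax; [reflexivity| |lia].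
  rewrite Hmax. exact rho_sq.
Qed.

End UnitVector.

Section Rotation.
Variables (o m : nat) (e w : vec).

(** Inside the block, [rotation t] has coordinate [rot_height t] along [e], and the
    component of [w] orthogonal to [e] rescaled by [rot_spread t] so as to stay on the
    sphere of radius [rho]; it moves [w] to [rho e] as [t] goes from 0 to 1. *)
Definition rot_height0 : R := bsum o m e w.
Definition rot_height (t : R) : R := (1 - t) * rot_height0 + t * rho.
Definition rot_spread (t : R) : R :=
  sqrt ((/ 2 - rot_height t * rot_height t) / (/ 2 - rot_height0 * rot_height0)).
Definition rotation (t : R) : vec :=
  upd o m w (fun j => rot_height t * e j + rot_spread t * (w j - rot_height0 * e j)).

Lemma rotation_bsum g t :
  bsum o m g (rotation t) =
  rot_height t * bsum o m g e + rot_spread t * (bsum o m g w - rot_height0 * bsum o m g e).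
Proof.
  unfold rotation. rewrite bsum_upd_r. unfold bsum.
  rewrite (rsum_ext _ _ (fun i => rot_height t * (g (o + i)%nat * e (o + i)%nat)
     + (rot_spread t * (g (o + i)%nat * w (o + i)%nat)
        + (- (rot_spread t * rot_height0)) * (g (o + i)%nat * e (o + i)%nat))))
    by (intros; ring).
  rewrite !rsum_plus, !rsum_scal. ring.
Qed.

Hypothesis He : bsum o m e e = 1.
Hypothesis Hw : bsum o m w w = / 2.
Hypothesis Hc : rot_height0 * rot_height0 < / 2.

Lemma rot_height_sq t : 0 <= t <= 1 -> rot_height t * rot_height t <= / 2.
Proof.
  intros Ht. pose proof rho_pos. pose proof rho_sq.
  assert (- rho < rot_height0 < rho) by (split; nra).
  assert (- rho < rot_height t <= rho) by (unfold rot_height; nra). nra.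
Qed.

Lemma rot_spread_sq t :
  0 <= t <= 1 ->
  rot_spread t * rot_spread t
  = (/ 2 - rot_height t * rot_height t) / (/ 2 - rot_height0 * rot_height0).
Proof.
  intros Ht. apply sqrt_sqrt. pose proof (rot_height_sq t Ht).
  apply Rmult_le_pos; [lra|]. left. apply Rinv_0_lt_compat. lra.
Qed.

Lemma rotation_height t : bsum o m e (rotation t) = rot_height t.
Proof. rewrite rotation_bsum, He. unfold rot_height0. ring. Qed.

Lemma rotation_norm t : 0 <= t <= 1 -> bsum o m (rotation t) (rotation t) = / 2.
Proof.
  intros Ht. rewrite rotation_bsum, (bsum_sym _ _ _ e), rotation_height,
    (bsum_sym _ _ _ w), rotation_bsum, Hw, (bsum_sym _ _ w e). fold rot_height0.
  replace (rot_height t * rot_height t + rot_spread t * (rot_height t * rot_height0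
      + rot_spread t * (/ 2 - rot_height0 * rot_height0) - rot_height0 * rot_height t))
    with (rot_height t * rot_height t
      + (rot_spread t * rot_spread t) * (/ 2 - rot_height0 * rot_height0)) by ring.
  rewrite rot_spread_sq by exact Ht. field. lra.
Qed.

Lemma rotation_0 : rotation 0 = w.
Proof.
  assert (Hs : rot_spread 0 = 1).
  { unfold rot_spread, rot_height. transitivity (sqrt 1); [f_equal|apply sqrt_1].
    field. lra. }
  apply functional_extensionality. intros j. unfold rotation, upd.
  destruct (in_block o m j); [|reflexivity].
  rewrite Hs. unfold rot_height. ring.
Qed.

Lemma rotation_1 : rotation 1 = upd o m w (vscale rho e).
Proof.
  assert (Hs : rot_spread 1 = 0).
  { unfold rot_spread, rot_height. transitivity (sqrt 0); [f_equal|apply sqrt_0].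
    replace ((1 - 1) * rot_height0 + 1 * rho) with rho by ring.
    rewrite rho_sq, Rminus_diag. unfold Rdiv. ring. }
  apply functional_extensionality. intros j. unfold rotation, upd, vscale.
  destruct (in_block o m j); [|reflexivity].
  rewrite Hs. unfold rot_height. ring.
Qed.

Lemma rotation_continuity_pt j t :
  0 <= t <= 1 -> continuity_pt (fun s => rotation s j) t.
Proof.
  intros Ht. unfold rotation, upd. destruct (in_block o m j); [|reg].
  assert (continuity_pt rot_spread t).
  { apply (continuity_pt_comp (fun s => (/ 2 - rot_height s * rot_height s)
             / (/ 2 - rot_height0 * rot_height0)) sqrt).
    - unfold rot_height. reg.
    - apply continuity_pt_sqrt. pose proof (rot_height_sq t Ht).
      apply Rmult_le_pos; [lra|]. left. apply Rinv_0_lt_compat. lra. }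
  unfold rot_height. reg.
Qed.

Lemma rot_spread_lt_1 t : rot_height0 = 0 -> 0 < t <= 1 -> rot_spread t < 1.
Proof.
  intros H0 Ht. pose proof rho_pos. pose proof rho_sq.
  unfold rot_spread, rot_height. rewrite H0.
  apply (Rlt_le_trans _ (sqrt 1)); [apply sqrt_lt_1_alt|rewrite sqrt_1; lra].
  replace ((1 - t) * 0 + t * rho) with (t * rho) by ring.
  replace ((/ 2 - t * rho * (t * rho)) / (/ 2 - 0 * 0)) with (1 - t * t)
    by (replace (t * rho * (t * rho)) with (t * t * (rho * rho)) by ring; rewrite rho_sq; field).
  split; [|nra]. nra.
Qed.

End Rotation.

Definition pair2 (o : nat) (x y : R) : vec :=
  fun j => if (j =? o)%nat then x else if (j =? o + 1)%nat then y else 0.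

Lemma pair2_fst o x y : pair2 o x y o = x.
Proof. unfold pair2. now rewrite Nat.eqb_refl. Qed.

Lemma pair2_snd o x y : pair2 o x y (o + 1)%nat = y.
Proof.
  unfold pair2. rewrite Nat.eqb_refl.
  replace (o + 1 =? o)%nat with false by (symmetry; apply Nat.eqb_neq; lia). reflexivity.
Qed.

Lemma pair2_other o x y j : j <> o -> j <> (o + 1)%nat -> pair2 o x y j = 0.
Proof.
  intros H0 H1. unfold pair2.
  replace (j =? o)%nat with false by (symmetry; apply Nat.eqb_neq; exact H0).
  replace (j =? o + 1)%nat with false by (symmetry; apply Nat.eqb_neq; exact H1). reflexivity.
Qed.

Lemma bsum_pair2 o m h x y :
  (2 <= m)%nat -> bsum o m h (pair2 o x y) = h o * x + h (o + 1)%nat * y.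
Proof.
  intros Hm. unfold bsum. rewrite rsum_first_two; [|exact Hm|].
  - rewrite Nat.add_0_r, pair2_fst, pair2_snd. reflexivity.
  - intros i Hi. rewrite pair2_other by lia. ring.
Qed.

Lemma exists_unit_orthogonal o m f :
  (2 <= m)%nat -> exists g, bsum o m g g = 1 /\ bsum o m f g = 0.
Proof.
  intros Hm.
  assert (Hh : exists h, 0 < bsum o m h h /\ bsum o m f h = 0).
  { set (a := f o). set (b := f (o + 1)%nat).
    destruct (Req_dec (a * a + b * b) 0) as [Hab|Hab].
    - exists (pair2 o 1 0). rewrite !bsum_pair2 by exact Hm.
      rewrite pair2_fst, pair2_snd. fold a. split; nra.
    - exists (pair2 o (- b) a). rewrite !bsum_pair2 by exact Hm.
      rewrite pair2_fst, pair2_snd. fold a b. split; [|ring].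
      pose proof (Rle_0_sqr a). pose proof (Rle_0_sqr b). unfold Rsqr in *. lra. }
  destruct Hh as [h [Hpos Horth]].
  set (N := sqrt (bsum o m h h)).
  assert (HN : 0 < N) by (apply sqrt_lt_R0; exact Hpos).
  assert (HNN : N * N = bsum o m h h) by (apply sqrt_sqrt; lra).
  exists (vscale (/ N) h). rewrite bsum_scal_l, bsum_scal_r, bsum_scal_r, Horth, <- HNN.
  split; [field; lra|ring].
Qed.

(** Rotate toward [e] itself, except when [w] is [- rho e] on the block: there that
    rotation does not move, and one rotates toward a direction orthogonal to [e]. *)
Lemma exists_ascending_rotation o m e w :
  (2 <= m)%nat -> bsum o m e e = 1 -> bsum o m w w = / 2 -> bsum o m e w < rho ->
  exists e', bsum o m e' e' = 1 /\ rot_height0 o m e' w * rot_height0 o m e' w < / 2 /\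
    forall t, 0 < t <= 1 -> bsum o m e w < bsum o m e (rotation o m e' w t).
Proof.
  intros Hm He Hw Hlt. pose proof rho_pos. pose proof rho_sq.
  pose proof (bsum_unit_bounds o m e w He Hw) as Hb.
  destruct (Req_dec (bsum o m e w) (- rho)) as [Hanti|Hnot].
  - destruct (exists_unit_orthogonal o m e Hm) as [g [Hg Hge]].
    assert (Hgw : rot_height0 o m g w = 0).
    { unfold rot_height0. rewrite bsum_sym. unfold bsum.
      rewrite (rsum_ext _ _ (fun i => bsum o m e w * (e (o + i)%nat * g (o + i)%nat)))
        by (intros i Hi; rewrite (bsum_unit_cauchy_schwarz_eq o m e w He Hw) by (nra || lia); ring).
      rewrite rsum_scal. fold (bsum o m e g). rewrite Hge. ring. }
    exists g. split; [exact Hg|split; [rewrite Hgw; lra|]].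
    intros t Ht. rewrite rotation_bsum, Hge, Hgw.
    pose proof (rot_spread_lt_1 o m g w t Hgw Ht). nra.
  - exists e. assert (Hc : rot_height0 o m e w * rot_height0 o m e w < / 2)
      by (unfold rot_height0; nra).
    split; [exact He|split; [exact Hc|]].
    intros t Ht. rewrite rotation_height by exact He.
    unfold rot_height, rot_height0. nra.
Qed.

Lemma continuity_pt_eps f x :
  continuity_pt f x -> forall eps, 0 < eps ->
  exists d, 0 < d /\ forall y, Rabs (y - x) < d -> Rabs (f y - f x) < eps.
Proof.
  intros Hf eps Heps. destruct (Hf eps Heps) as [d [Hd Hclose]]. exists d. split; [exact Hd|].
  intros y Hy. destruct (Req_dec y x) as [->|Hne].
  - rewrite Rminus_diag, Rabs_R0. exact Heps.
  - apply (Hclose y). split; [split; [exact I|auto]|exact Hy].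
Qed.

Section Topology.
Variables p q : nat.

Definition quasi_connected (S : vec -> Prop) (x y : vec) : Prop :=
  forall U V, is_open p q U -> is_open p q V -> (forall z, S z -> U z \/ V z) ->
    (forall z, S z -> U z -> V z -> False) -> U x -> U y.

Lemma quasi_connected_trans S x y z :
  quasi_connected S x y -> quasi_connected S y z -> quasi_connected S x z.
Proof. intros Hxy Hyz U V HU HV Hcov Hdis Ux. apply (Hyz U V), (Hxy U V); assumption. Qed.

Lemma quasi_connected_sym S x y : S x -> S y -> quasi_connected S x y -> quasi_connected S y x.
Proof.
  intros Sx Sy Hxy U V HU HV Hcov Hdis Uy.
  destruct (Hcov x Sx) as [Ux|Vx]; [exact Ux|exfalso].
  apply (Hdis y Sy Uy). apply (Hxy V U); try assumption.
  - intros z Sz. destruct (Hcov z Sz); tauto.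
  - intros z Sz Vz Uz. exact (Hdis z Sz Uz Vz).
Qed.

Lemma connected_of_quasi_connected S :
  (forall x y, S x -> S y -> quasi_connected S x y) -> connected p q S.
Proof.
  intros H [U [V [HU [HV [Hcov [[x [Sx Ux]] [[y [Sy Vy]] Hdis]]]]]]].
  apply (Hdis y Sy); [|exact Vy]. exact (H x y Sx Sy U V HU HV Hcov Hdis Ux).
Qed.

Definition path_continuous (g : R -> vec) : Prop :=
  forall t, 0 <= t <= 1 -> forall eps, 0 < eps -> exists d, 0 < d /\
    forall s, 0 <= s <= 1 -> Rabs (s - t) < d -> Defs.dist p q (g t) (g s) < eps.

Lemma path_continuous_of_coords (g : R -> vec) :
  (forall t, 0 <= t <= 1 -> forall j, continuity_pt (fun s => g s j) t) -> path_continuous g.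
Proof.
  intros Hg t Ht eps Heps.
  set (F := fun s => rsum (p + q + 2) (fun i => (g t i - g s i) * (g t i - g s i))).
  assert (HF : continuity_pt F t).
  { apply (rsum_continuity_pt _ (fun i s => (g t i - g s i) * (g t i - g s i))). intros i _.
    apply (continuity_pt_mult (fun s => g t i - g s i) (fun s => g t i - g s i));
      apply (continuity_pt_minus (fun _ => g t i) (fun s => g s i));
      [apply continuity_pt_const; intros ? ?; reflexivity|apply Hg, Ht
      |apply continuity_pt_const; intros ? ?; reflexivity|apply Hg, Ht]. }
  destruct (continuity_pt_eps F t HF (eps * eps)) as [d [Hd Hclose]]; [nra|].
  exists d. split; [exact Hd|]. intros s Hs Hst.
  specialize (Hclose s Hst).
  assert (HFt : F t = 0).
  { unfold F. rewrite (rsum_ext _ _ (fun _ => 0 * 0)) by (intros; ring).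
    rewrite (rsum_scal _ 0 (fun _ => 0)). ring. }
  unfold Defs.dist, eucl_norm. rewrite <- (sqrt_square eps) by lra.
  apply sqrt_lt_1; [apply rsum_nonneg; intros; apply Rle_0_sqr|nra|].
  rewrite HFt, Rminus_0_r in Hclose. apply Rabs_def2 in Hclose. unfold F in Hclose. lra.
Qed.

(** With [T] the supremum of the times up to which [g] stays in [U]: [g T] is not in [V]
    since [V] is open, and [T < 1] would contradict the openness of [U]. *)
Lemma path_quasi_connected S (g : R -> vec) :
  path_continuous g -> (forall t, 0 <= t <= 1 -> S (g t)) -> quasi_connected S (g 0) (g 1).
Proof.
  intros Hg HS U V HU HV Hcov Hdis U0.
  set (E := fun t => 0 <= t <= 1 /\ forall s, 0 <= s <= t -> U (g s)).
  assert (E0 : E 0) by (split; [lra|]; intros s Hs; replace s with 0 by lra; exact U0).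
  assert (Ebound : bound E) by (exists 1; intros x [Hx _]; lra).
  destruct (completeness E Ebound (ex_intro _ 0 E0)) as [T [HTub HTlub]].
  assert (HT0 : 0 <= T) by (apply HTub; exact E0).
  assert (HT1 : T <= 1) by (apply HTlub; intros x [Hx _]; lra).
  assert (Hbefore : forall s, 0 <= s < T -> U (g s)).
  { intros s Hs. apply NNPP. intros Hns.
    assert (T <= s); [|lra].
    apply HTlub. intros x [Hx Hux]. destruct (Rle_lt_dec x s) as [|Hsx]; [assumption|].
    exfalso. apply Hns, Hux. lra. }
  assert (HUT : U (g T)).
  { destruct (Hcov (g T) (HS T (conj HT0 HT1))) as [|VT]; [assumption|exfalso].
    destruct (Req_dec T 0) as [->|HTne]; [exact (Hdis (g 0) (HS 0 ltac:(lra)) U0 VT)|].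
    destruct (HV _ VT) as [eps [Heps Hball]].
    destruct (Hg T (conj HT0 HT1) eps Heps) as [d [Hd Hclose]].
    set (s := Rmax 0 (T - d / 2)).
    assert (0 <= s) by apply Rmax_l. assert (T - d / 2 <= s) by apply Rmax_r.
    assert (s < T) by (apply Rmax_lub_lt; lra).
    apply (Hdis (g s)); [apply HS; lra|apply Hbefore; lra|].
    apply Hball, Hclose; [lra|]. rewrite Rabs_left; lra. }
  destruct (Req_dec T 1) as [<-|HTne]; [exact HUT|exfalso].
  destruct (HU _ HUT) as [eps [Heps Hball]].
  destruct (Hg T (conj HT0 HT1) eps Heps) as [d [Hd Hclose]].
  set (T' := Rmin 1 (T + d / 2)).
  assert (T < T') by (apply Rmin_glb_lt; lra).
  assert (T' <= 1) by apply Rmin_l. assert (T' <= T + d / 2) by apply Rmin_r.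
  assert (ET' : E T').
  { split; [lra|]. intros s Hs. destruct (Rlt_le_dec s T); [apply Hbefore; lra|].
    destruct (Req_dec s T) as [->|]; [exact HUT|].
    apply Hball, Hclose; [lra|]. rewrite Rabs_right; lra. }
  pose proof (HTub T' ET'). lra.
Qed.

Lemma path_start_adherent S (g : R -> vec) :
  path_continuous g -> (forall t, 0 < t <= 1 -> S (g t)) ->
  forall eps, 0 < eps -> exists x, S x /\ Defs.dist p q (g 0) x < eps.
Proof.
  intros Hg HS eps Heps.
  destruct (Hg 0 ltac:(lra) eps Heps) as [d [Hd Hclose]].
  set (s := Rmin 1 (d / 2)).
  assert (0 < s) by (apply Rmin_glb_lt; lra).
  assert (s <= 1) by apply Rmin_l. assert (s <= d / 2) by apply Rmin_r.
  exists (g s). split; [apply HS; lra|].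
  apply Hclose; [lra|]. rewrite Rminus_0_r, Rabs_right; lra.
Qed.

Lemma coord_le_dist x y i : (i < p + q + 2)%nat -> Rabs (x i - y i) <= Defs.dist p q x y.
Proof.
  intros Hi. unfold Defs.dist, eucl_norm. rewrite <- sqrt_Rsqr_abs. apply sqrt_le_1_alt.
  apply (rsum_ge_term _ (fun i => (x i - y i) * (x i - y i))); [intros; apply Rle_0_sqr|exact Hi].
Qed.

Lemma Bform_abs_le v d :
  Rabs (Bform p q v d) <= rsum (p + q + 2) (fun i => Rabs (v i) * Rabs (d i)).
Proof.
  unfold Bform. replace (p + q + 2)%nat with (S p + S q)%nat by lia. rewrite rsum_app.
  eapply Rle_trans; [apply Rabs_triang|]. rewrite Rabs_Ropp.
  apply Rplus_le_compat; (eapply Rle_trans; [apply rsum_abs|]);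
    right; apply rsum_ext; intros; apply Rabs_mult.
Qed.

Lemma Bform_minus_r v x y : Bform p q v x - Bform p q v y = Bform p q v (fun i => x i - y i).
Proof.
  unfold Bform.
  rewrite (rsum_ext (S p) (fun i => v i * (x i - y i)) (fun i => v i * x i + (-1) * (v i * y i)))
    by (intros; ring).
  rewrite (rsum_ext (S q) (fun i => v (S p + i)%nat * (x (S p + i)%nat - y (S p + i)%nat))
             (fun i => v (S p + i)%nat * x (S p + i)%nat
                       + (-1) * (v (S p + i)%nat * y (S p + i)%nat)))
    by (intros; ring).
  rewrite !rsum_plus, !rsum_scal. ring.
Qed.

Lemma open_Bform_pos v : is_open p q (fun w => Bform p q v w > 0).
Proof.
  intros x Hx. set (L := rsum (p + q + 2) (fun i => Rabs (v i))).
  assert (HL : 0 <= L) by (apply rsum_nonneg; intros; apply Rabs_pos).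
  exists (Bform p q v x / (L + 1)). split; [apply Rdiv_lt_0_compat; lra|].
  intros y Hy.
  assert (Hdist : Defs.dist p q x y * (L + 1) < Bform p q v x)
    by (apply (Rmult_lt_compat_r (L + 1)) in Hy; [|lra];
        unfold Rdiv in Hy; rewrite Rmult_assoc, Rinv_l in Hy by lra; lra).
  assert (Hd0 : 0 <= Defs.dist p q x y) by apply sqrt_pos.
  enough (Hbound : Rabs (Bform p q v x - Bform p q v y) < Bform p q v x)
    by (apply Rabs_def2 in Hbound; lra).
  rewrite Bform_minus_r. eapply Rle_lt_trans; [apply Bform_abs_le|].
  eapply Rle_lt_trans.
  - apply (rsum_le _ _ (fun i => Defs.dist p q x y * Rabs (v i))). intros i Hi.
    rewrite (Rmult_comm (Defs.dist _ _ _ _)).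
    apply Rmult_le_compat_l; [apply Rabs_pos|apply coord_le_dist, Hi].
  - rewrite rsum_scal. fold L. nra.
Qed.

Lemma is_open_inter U V :
  is_open p q U -> is_open p q V -> is_open p q (fun w => U w /\ V w).
Proof.
  intros HU HV x [Ux Vx].
  destruct (HU x Ux) as [e1 [He1 H1]]. destruct (HV x Vx) as [e2 [He2 H2]].
  exists (Rmin e1 e2). split; [now apply Rmin_pos|].
  intros y Hy. split; [apply H1|apply H2]; eapply Rlt_le_trans;
    [exact Hy|apply Rmin_l|exact Hy|apply Rmin_r].
Qed.

End Topology.

Lemma pred_ext (A B : vec -> Prop) : (forall w, A w <-> B w) -> A = B.
Proof.
  intros H. apply functional_extensionality. intros w. apply propositional_extensionality, H.
Qed.

Definition Ehalf (p q : nat) (v : vec) : vec -> Prop :=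
  fun w => Etilde p q w /\ Bform p q v w > 0.

Section HalfConnected.
Variables (p q : nat) (v : vec).
Hypothesis Hv : EinRep p q v.

Lemma Bform_bcoord_split b x :
  Bform p q v x = vsize p q v * (bcoord p q v b x + bcoord p q v (negb b) x).
Proof. rewrite Bform_bcoord by exact Hv. destruct b; simpl; ring. Qed.

Lemma bcoord_upd_other b w f :
  bcoord p q v (negb b) (upd (boff p b) (blen p q b) w f) = bcoord p q v (negb b) w.
Proof. apply bsum_upd_disjoint_r, blocks_disjoint. Qed.

Lemma bcoord_bounds b w : Etilde p q w -> - rho <= bcoord p q v b w <= rho.
Proof.
  intros Ew. apply Etilde_iff in Ew as [_ Hw].
  apply bsum_unit_bounds; [apply vdir_unit, Hv|apply Hw].
Qed.

Lemma Etilde_block_rotation b e w t :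
  Etilde p q w -> bsum (boff p b) (blen p q b) e e = 1 ->
  rot_height0 (boff p b) (blen p q b) e w * rot_height0 (boff p b) (blen p q b) e w < / 2 ->
  0 <= t <= 1 -> Etilde p q (rotation (boff p b) (blen p q b) e w t).
Proof.
  intros Ew He Hc Ht. pose proof Ew as [_ Hw]%Etilde_iff.
  apply Etilde_upd; [exact Ew|]. rewrite <- (bsum_upd (boff p b) (blen p q b) w).
  apply rotation_norm; [exact He|apply Hw|exact Hc|exact Ht].
Qed.

Lemma Bform_block_rotation b e w t :
  Bform p q v (rotation (boff p b) (blen p q b) e w t) =
  vsize p q v * (bsum (boff p b) (blen p q b) (vdir p q v b)
                   (rotation (boff p b) (blen p q b) e w t)
                 + bcoord p q v (negb b) w).
Proof. rewrite (Bform_bcoord_split b). unfold rotation at 2. now rewrite bcoord_upd_other. Qed.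

(** Rotating block [b] of [w] to [rho * vdir b] only increases [B(v,.)], so the rotation
    stays inside the half. *)
Lemma Ehalf_block_step b w :
  Ehalf p q v w ->
  Ehalf p q v (upd (boff p b) (blen p q b) w (vscale rho (vdir p q v b))) /\
  quasi_connected p q (Ehalf p q v) w (upd (boff p b) (blen p q b) w (vscale rho (vdir p q v b))).
Proof.
  intros [Ew Hpos]. pose proof (vsize_pos p q v Hv) as Hs.
  pose proof (bcoord_bounds b w Ew) as Hb. pose proof (bcoord_bounds (negb b) w Ew) as Hnb.
  pose proof (vdir_unit p q v Hv b) as He. pose proof Ew as [_ Hw]%Etilde_iff.
  destruct (Req_dec (bcoord p q v b w) rho) as [Hmax|Hlt].
  - rewrite upd_scale_rho_id by (exact He || exact (Hw b) || exact Hmax).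
    split; [split; assumption|]. intros U V _ _ _ _ Uw. exact Uw.
  - rewrite (Bform_bcoord_split b) in Hpos.
    assert (Hsum : 0 < bcoord p q v b w + bcoord p q v (negb b) w)
      by (apply (Rmult_lt_reg_l (vsize p q v)); lra).
    assert (Hin : - rho < bcoord p q v b w < rho) by lra.
    assert (Hc : rot_height0 (boff p b) (blen p q b) (vdir p q v b) w
                 * rot_height0 (boff p b) (blen p q b) (vdir p q v b) w < / 2)
      by (pose proof rho_sq; unfold rot_height0; fold (bdot p q b); fold (bcoord p q v b w); nra).
    set (g := rotation (boff p b) (blen p q b) (vdir p q v b) w).
    assert (Hpath : forall t, 0 <= t <= 1 -> Ehalf p q v (g t)).
    { intros t Ht. split; [now apply Etilde_block_rotation|].
      unfold g. rewrite Bform_block_rotation, rotation_height by exact He.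
      unfold rot_height, rot_height0. fold (bdot p q b). fold (bcoord p q v b w).
      apply Rmult_lt_0_compat; [exact Hs|nra]. }
    rewrite <- rotation_1 by assumption. fold g. split; [apply Hpath; lra|].
    rewrite <- (rotation_0 (boff p b) (blen p q b) (vdir p q v b) w) at 1 by assumption.
    apply path_quasi_connected; [|exact Hpath].
    apply path_continuous_of_coords. intros t Ht j. apply rotation_continuity_pt; assumption.
Qed.

(** The point of [Etilde] maximising [B(v,.)]; [w] only fills the coordinates outside both
    blocks, which vanish on [Etilde] (lemma [corner_indep]). *)
Definition corner (w : vec) : vec :=
  upd (boff p false) (blen p q false)
    (upd (boff p true) (blen p q true) w (vscale rho (vdir p q v true)))
    (vscale rho (vdir p q v false)).

Lemma corner_indep w w' : isvec p q w -> isvec p q w' -> corner w = corner w'.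
Proof.
  intros Hw Hw'. apply functional_extensionality. intros j. unfold corner, upd.
  destruct (in_block (boff p false) (blen p q false) j) eqn:Hj'; [reflexivity|].
  destruct (in_block (boff p true) (blen p q true) j) eqn:Hj; [reflexivity|].
  rewrite Hw, Hw'; [reflexivity| |];
    apply Bool.not_true_iff_false in Hj, Hj'; rewrite in_blockP in Hj, Hj'; simpl in *; lia.
Qed.

Lemma Ehalf_connected : connected p q (Ehalf p q v).
Proof.
  assert (Hcorner : forall w, Ehalf p q v w ->
            Ehalf p q v (corner w) /\ quasi_connected p q (Ehalf p q v) w (corner w)).
  { intros w Hw. destruct (Ehalf_block_step true w Hw) as [Hw1 Hlink1].
    destruct (Ehalf_block_step false _ Hw1) as [Hw2 Hlink2].
    split; [exact Hw2|]. exact (quasi_connected_trans p q _ _ _ _ Hlink1 Hlink2). }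
  apply connected_of_quasi_connected. intros x y Hx Hy.
  destruct (Hcorner x Hx) as [_ Hxc]. destruct (Hcorner y Hy) as [Hyc Hyl].
  rewrite (corner_indep x y (proj1 (proj1 Hx)) (proj1 (proj1 Hy))) in Hxc.
  apply (quasi_connected_trans p q _ _ _ _ Hxc). now apply quasi_connected_sym.
Qed.

End HalfConnected.

Section Patches.
Variables p q : nat.

Lemma preimX_MinkEin v :
  preimX p q (MinkEin p q v) = fun w => Etilde p q w /\ Bform p q v w <> 0.
Proof.
  apply pred_ext. intros w. unfold preimX, MinkEin.
  split; [tauto|]. intros [Ew Hne]. split; [exact Ew|split; [apply Etilde_EinRep, Ew|exact Hne]].
Qed.

(** The open sets [B(v,.) > 0] and [B(v,.) < 0] would separate the component if it met
    both, so it lies in the connected set [Ehalf v]; maximality gives equality. *)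
Lemma component_Ehalf v M x0 :
  EinRep p q v -> is_component p q (fun w => Etilde p q w /\ Bform p q v w <> 0) M ->
  M x0 -> Bform p q v x0 > 0 -> M = Ehalf p q v.
Proof.
  intros Hv [_ [Hsub [Hconn Hmax]]] Mx0 Hx0.
  assert (HM : forall y, M y -> Ehalf p q v y).
  { intros y My. destruct (Hsub y My) as [Ey Hy]. split; [exact Ey|].
    destruct (Rlt_le_dec 0 (Bform p q v y)) as [|Hneg]; [assumption|exfalso].
    apply Hconn. exists (fun w => Bform p q v w > 0), (fun w => Bform p q (vopp v) w > 0).
    split; [apply open_Bform_pos|split; [apply open_Bform_pos|]].
    split; [|split; [exists x0; split; assumption|split]].
    - intros z Mz. destruct (Hsub z Mz) as [_ Hz]. rewrite Bform_opp_l. lra.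
    - exists y. split; [exact My|]. rewrite Bform_opp_l. lra.
    - intros z _ Hz1 Hz2. rewrite Bform_opp_l in Hz2. lra. }
  apply pred_ext. intros w. split; [apply HM|]. intros Hw.
  apply (Hmax (Ehalf p q v)); [apply Ehalf_connected, Hv|exact HM| |exact Hw].
  intros z [Ez Hz]. split; [exact Ez|lra].
Qed.

Lemma MinkPatchTilde_Ehalf M :
  MinkPatchTilde p q M -> exists v, EinRep p q v /\ M = Ehalf p q v.
Proof.
  intros [v [Hv Hcomp]]. rewrite preimX_MinkEin in Hcomp.
  pose proof Hcomp as [[x0 Mx0] [Hsub _]]. destruct (Hsub x0 Mx0) as [_ Hx0].
  destruct (Rlt_le_dec 0 (Bform p q v x0)) as [Hpos|Hneg].
  - exists v. split; [exact Hv|]. now apply (component_Ehalf v M x0).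
  - exists (vopp v). split; [now apply EinRep_opp|].
    apply (component_Ehalf (vopp v) M x0); [now apply EinRep_opp| |exact Mx0|].
    + replace (fun w => Etilde p q w /\ Bform p q (vopp v) w <> 0)
        with (fun w => Etilde p q w /\ Bform p q v w <> 0); [exact Hcomp|].
      apply pred_ext. intros w. rewrite Bform_opp_l. split; intros [Ew Hw]; split; lra || auto.
    + rewrite Bform_opp_l. lra.
Qed.

End Patches.

Lemma Rmult_pos_cases x y : x * y > 0 -> (0 < x /\ 0 < y) \/ (x < 0 /\ y < 0).
Proof.
  intros Hxy.
  destruct (Rtotal_order x 0) as [Hx|[Hx|Hx]]; destruct (Rtotal_order y 0) as [Hy|[Hy|Hy]];
    subst; try lra; nra.
Qed.

Section Projection.
Variables p q : nat.

Lemma image_iota_Ehalf v : image iota (Ehalf p q v) = Ehalf p q (vopp v).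
Proof.
  assert (Hinv : forall w, vopp (vopp w) = w)
    by (intros w; apply functional_extensionality; intros; unfold vopp; ring).
  apply pred_ext. intros w. unfold image, iota, Ehalf. rewrite Bform_opp_l. split.
  - intros [u [[Eu Hu] ->]]. split; [now apply Etilde_opp|]. rewrite Bform_opp_r. lra.
  - intros [Ew Hw]. exists (vopp w). rewrite Hinv. split; [|reflexivity].
    split; [now apply Etilde_opp|]. rewrite Bform_opp_r. lra.
Qed.

Lemma piX_inter_Ehalf a b u :
  EinRep p q u ->
  (piX (inter (Ehalf p q a) (Ehalf p q b)) u <-> Bform p q a u * Bform p q b u > 0).
Proof.
  intros Hu. split.
  - intros [w [[[_ Ha] [_ Hb]] [c [Hc ->]]]]. rewrite !Bform_scal_r.
    assert (0 < c * c) by (apply Rsqr_pos_lt in Hc; exact Hc).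
    replace (c * Bform p q a w * (c * Bform p q b w))
      with ((c * c) * (Bform p q a w * Bform p q b w)) by ring.
    apply Rmult_lt_0_compat; nra.
  - intros Hab. destruct (EinRep_normalize p q u Hu) as [k [w [Hk [Ew ->]]]].
    rewrite !Bform_scal_r in Hab.
    assert (Hw : Bform p q a w * Bform p q b w > 0)
      by (replace (k * Bform p q a w * (k * Bform p q b w))
            with ((k * k) * (Bform p q a w * Bform p q b w)) in Hab by ring; nra).
    destruct (Rmult_pos_cases _ _ Hw) as [[Ha Hb]|[Ha Hb]].
    + exists w. split; [split; split; assumption|].
      exists k. split; [lra|reflexivity].
    + exists (vopp w). split.
      * split; split; try (now apply Etilde_opp); rewrite Bform_opp_r; lra.
      * exists (- k). split; [lra|]. rewrite vopp_scale.
        apply functional_extensionality. intros i. unfold vscale. ring.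
Qed.

Lemma piX_Ehalf a u : EinRep p q u -> (piX (Ehalf p q a) u <-> Bform p q a u <> 0).
Proof.
  intros Hu. replace (Ehalf p q a) with (inter (Ehalf p q a) (Ehalf p q a))
    by (apply pred_ext; unfold inter; tauto).
  rewrite piX_inter_Ehalf by exact Hu. split; [intros H Hz; rewrite Hz in H; lra|].
  intros Hne. apply Rsqr_pos_lt in Hne. exact Hne.
Qed.

End Projection.

Section Boundary.
Variables p q : nat.
Hypotheses (Hp : (1 <= p)%nat) (Hq : (1 <= q)%nat).

(** Rotate a block in which the coordinate of [w] along [v] is not positive, so that this
    coordinate increases while the other block stays fixed. *)
Lemma Ehalf_meets_open v w U :
  EinRep p q v -> Etilde p q w -> Bform p q v w = 0 -> is_open p q U -> U w ->
  exists w', Ehalf p q v w' /\ U w'.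
Proof.
  intros Hv Ew Hzero HU Uw. pose proof (vsize_pos p q v Hv) as Hs.
  rewrite (Bform_bcoord p q v Hv) in Hzero.
  assert (Hsum : bcoord p q v true w + bcoord p q v false w = 0)
    by (apply (Rmult_eq_reg_l (vsize p q v)); lra).
  assert (Hb : exists b, bcoord p q v b w <= 0 /\ bcoord p q v b w + bcoord p q v (negb b) w = 0)
    by (destruct (Rle_lt_dec (bcoord p q v true w) 0); [exists true|exists false]; simpl; lra).
  destruct Hb as [b [Hb Hsumb]].
  pose proof Ew as [_ Hw]%Etilde_iff.
  destruct (exists_ascending_rotation (boff p b) (blen p q b) (vdir p q v b) w)
    as [e [He [Hc Hasc]]]; [destruct b; simpl; lia|apply vdir_unit, Hv|apply Hw|
      change (bcoord p q v b w < rho); pose proof rho_pos; lra|].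
  set (g := rotation (boff p b) (blen p q b) e w).
  assert (Hg : forall t, 0 < t <= 1 -> Ehalf p q v (g t)).
  { intros t Ht. split; [apply Etilde_block_rotation; [exact Ew|exact He|exact Hc|lra]|].
    unfold g. rewrite (Bform_block_rotation p q v Hv). apply Rmult_lt_0_compat; [exact Hs|].
    specialize (Hasc t Ht). change (bsum _ _ (vdir p q v b) w) with (bcoord p q v b w) in Hasc.
    lra. }
  destruct (HU w Uw) as [eps [Heps Hball]].
  destruct (path_start_adherent p q (Ehalf p q v) g) with (eps := eps) as [x [Hx Hdx]];
    [|exact Hg|exact Heps|].
  - apply path_continuous_of_coords. intros t Ht j. apply rotation_continuity_pt; assumption.
  - exists x. split; [exact Hx|]. apply Hball. unfold g in Hdx.
    rewrite rotation_0 in Hdx by assumption. exact Hdx.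
Qed.

(** If [w] lay in [Ehalf v1] but not in [Ehalf v2], a perturbation inside [Ehalf v1] would
    make [B(v2,w) < 0] and [B(v3,w) <> 0]; depending on the sign of [B(v3,w)], either [w]
    or [-w] then contradicts one of the two inclusions. *)
Lemma Ehalf_incl_of_inter v1 v2 v3 :
  EinRep p q v2 -> EinRep p q v3 ->
  (forall w, inter (Ehalf p q v1) (Ehalf p q v3) w -> Ehalf p q v2 w) ->
  (forall w, inter (Ehalf p q v2) (Ehalf p q v3) w -> Ehalf p q v1 w) ->
  forall w, Ehalf p q v1 w -> Ehalf p q v2 w.
Proof.
  intros Hv2 Hv3 H13 H23 w [Ew H1w]. apply NNPP. intros Hn.
  assert (H2w : Bform p q v2 w <= 0)
    by (destruct (Rlt_le_dec 0 (Bform p q v2 w)); [exfalso; apply Hn; split|]; assumption).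
  assert (Hw1 : exists w1, Ehalf p q v1 w1 /\ Bform p q v2 w1 < 0).
  { destruct (Rlt_le_dec (Bform p q v2 w) 0) as [Hlt|Hge]; [exists w; split; [split|]; assumption|].
    destruct (Ehalf_meets_open (vopp v2) w (fun x => Bform p q v1 x > 0))
      as [w1 [[E1 H21] H11]];
      [now apply EinRep_opp|exact Ew|rewrite Bform_opp_l; lra|apply open_Bform_pos|exact H1w|].
    exists w1. rewrite Bform_opp_l in H21. split; [split|lra]; assumption. }
  destruct Hw1 as [w1 [[E1 H11] H21]].
  assert (Hw2 : exists w2, Ehalf p q v1 w2 /\ Bform p q v2 w2 < 0 /\ Bform p q v3 w2 <> 0).
  { destruct (Req_dec (Bform p q v3 w1) 0) as [H31|H31];
      [|exists w1; split; [split|split]; assumption].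
    destruct (Ehalf_meets_open v3 w1
                (fun x => Bform p q v1 x > 0 /\ Bform p q (vopp v2) x > 0))
      as [w2 [[E2 H32] [H12 H22]]];
      [exact Hv3|exact E1|exact H31|apply is_open_inter; apply open_Bform_pos|
       rewrite Bform_opp_l; split; lra|].
    rewrite Bform_opp_l in H22. exists w2. split; [split|split]; try assumption; lra. }
  destruct Hw2 as [w2 [[E2 H12] [H22 H32]]].
  destruct (Rlt_le_dec 0 (Bform p q v3 w2)) as [Hpos|Hneg].
  - destruct (H13 w2) as [_ Hc]; [split; split; assumption|]. lra.
  - destruct (H23 (vopp w2)) as [_ Hc].
    + split; split; try (now apply Etilde_opp); rewrite Bform_opp_r; lra.
    + rewrite Bform_opp_r in Hc. lra.
Qed.

End Boundary.

Theorem lemma2p8 (p q : nat) (hp : (2 <= p)%nat) (hq : (2 <= q)%nat) :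
  (forall M1 M2 : vec -> Prop,
     MinkPatchTilde p q M1 -> MinkPatchTilde p q M2 ->
     forall u, EinRep p q u ->
       (piX (inter M1 (image iota M2)) u <->
        (piX M1 u /\ piX M2 u /\ ~ piX (inter M1 M2) u)))
  /\
  (forall M1 M2 M3 : vec -> Prop,
     MinkPatchTilde p q M1 -> MinkPatchTilde p q M2 -> MinkPatchTilde p q M3 ->
     (forall w, inter M1 M3 w <-> inter M2 M3 w) ->
     forall w, M1 w <-> M2 w).
Proof.
  split.
  - intros M1 M2 HM1 HM2 u Hu.
    destruct (MinkPatchTilde_Ehalf p q M1 HM1) as [v1 [_ ->]].
    destruct (MinkPatchTilde_Ehalf p q M2 HM2) as [v2 [_ ->]].
    rewrite image_iota_Ehalf, !piX_inter_Ehalf, !piX_Ehalf, Bform_opp_l by exact Hu.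
    set (a := Bform p q v1 u). set (b := Bform p q v2 u).
    split.
    + intros Hab. split; [|split]; [intros ->|intros ->|]; lra.
    + intros [Ha [Hb Hnab]]. apply Rnot_gt_le in Hnab.
      destruct (Rle_lt_or_eq_dec _ _ Hnab) as [|Hz]; [lra|].
      apply Rmult_integral in Hz as [|]; contradiction.
  - intros M1 M2 M3 HM1 HM2 HM3 Hinter.
    destruct (MinkPatchTilde_Ehalf p q M1 HM1) as [v1 [Hv1 ->]].
    destruct (MinkPatchTilde_Ehalf p q M2 HM2) as [v2 [Hv2 ->]].
    destruct (MinkPatchTilde_Ehalf p q M3 HM3) as [v3 [Hv3 ->]].
    intros w. split; apply Ehalf_incl_of_inter with v3; try lia; try assumption;
      intros x Hx; apply Hinter, Hx.
Qed.
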